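(* Let $n\ge2$, let $\mathbb{A}=(A_{ij})_{i,j=1}^n$ be an operator matrix as in the context, and assume that for all $i\ne j$ there are constants $c_{ij},d_{ij}\ge0$ with $\|A_{ij}x_j\|_{X_i}\le c_{ij}\|A_{jj}x_j\|_{X_j}+d_{ij}\|x_j\|_{X_j}$ for all $x_j\in\mathcal{D}(A_{jj})$ and $\sum_{i=1,i\ne j}^nc_{ij}<1$ for every $j$. Let $\mathfrak{I}_0$ be the set of those $m\in\{1,\ldots,n\}$ for which there exists a permutation $\pi$ of $\{1,\ldots,n\}$ with (1) $\pi(m)=n$ and (2) $\sigma(A_{\pi^{-1}(k),\pi^{-1}(k)})\cup\sigma(\mathbb{A}(\pi)_k)\ne\mathbb{C}$ for all $k\in\{2,\ldots,n-1\}$. Then $\sigma(\mathbb{A})\subset\bigcap_{m\in\mathfrak{I}_0}S_m(\mathbb{A})$.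
   Context: Let $X_1,\ldots,X_n$ be complex Banach spaces and $X=X_1\times\cdots\times X_n$ with norm $\|x\|=\sum_i\|x_i\|_{X_i}$. For $i,j$, $A_{ij}:\mathcal{D}(A_{ij})\subset X_j\to X_i$ are linear, $A_{ii}$ closed, and for $i\ne j$ $\mathcal{D}(A_{jj})\subset\mathcal{D}(A_{ij})$. $\mathbb{A}=(A_{ij})$ acts on $\mathcal{D}(A_{11})\times\cdots\times\mathcal{D}(A_{nn})$ by $(\mathbb{A}x)_i=\sum_jA_{ij}x_j$. For a permutation $\pi$, $\mathbb{A}(\pi):=(A_{\pi^{-1}(i),\pi^{-1}(j)})_{i,j=1}^n$ acts on $X_{\pi^{-1}(1)}\times\cdots\times X_{\pi^{-1}(n)}$ with domain $\prod_i\mathcal{D}(A_{\pi^{-1}(i),\pi^{-1}(i)})$, and $\mathbb{A}(\pi)_k$ is its upper-left $k\times k$ block with domain $\prod_{i=1}^k\mathcal{D}(A_{\pi^{-1}(i),\pi^{-1}(i)})$. $\sigma(S)$ is the set of $\lambda$ for which $\lambda-S$ is not bijective from $\mathcal{D}(S)$ with bounded inverse. For $j\ne k$ and $\lambda\notin\sigma(A_{kk})\cup\sigma(A_{jj})$, $\mathcal{R}_{kj}(\lambda):=\sum_{i=1,i\ne k}^n\|(A_{ik}(\lambda-A_{kk})^{-1}A_{kj}+(1-\delta_{ij})A_{ij})(\lambda-A_{jj})^{-1}\|$; $S_{kj}(\mathbb{A}):=\sigma(A_{kk})\cup\sigma(A_{jj})\cup\{\lambda\notin\sigma(A_{kk})\cup\sigma(A_{jj}):\mathcal{R}_{kj}(\lambda)\ge1\}$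 and $S_k(\mathbb{A}):=\bigcup_{j\ne k}S_{kj}(\mathbb{A})$. *)

(* complex Banach spaces are modelled as
   complete normed modules over C := R[i] (R : realType). *)
From HB Require Import structures.
From mathcomp Require Import all_boot all_order all_algebra all_fingroup.
From mathcomp Require Import all_classical all_reals all_analysis.
From mathcomp Require Import complex.
Import Order.TTheory GRing.Theory Num.Theory.
Import numFieldNormedType.Exports.


Local Open Scope ring_scope.
Local Open Scope classical_set_scope.

Section OperatorMatrix.
Variable R : realType.
Local Notation C := (R[i]).

Definition lin_on (X Y : normedModType C) (A : X -> Y) (D : set X) : Prop :=
  D 0 /\
  (forall (a : C) x y, D x -> D y -> D (a *: x + y)) /\
  (forall (a : C) x y, D x -> D y -> A (a *: x + y) = a *: A x + A y).

(** A (possibly unbounded) operator with domain [D] is closed: its graph is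
    closed in X x X (sequential characterisation, valid in metric spaces). *)
Definition closed_op (X : normedModType C) (A : X -> X) (D : set X) : Prop :=
  forall (u : nat -> X) (x y : X), (forall k, D (u k)) ->
    u @ \oo --> x -> (A \o u) @ \oo --> y -> D x /\ A x = y.

Definition spec1 (X : normedModType C) (A : X -> X) (D : set X) : set C :=
  [set lam | ~ [/\ (forall x y, D x -> D y -> lam *: x - A x = lam *: y - A y -> x = y),
                  (forall y, exists2 x, D x & lam *: x - A x = y) &
                  (exists c : C, forall x, D x -> `|x| <= c * `|lam *: x - A x|)]].

(** Spectrum of the operator matrix (B_ij)_{i,j in K} acting on the product
    of the Y_i, i in K, with norm sum_i ||x_i||, on the domain prod_{i in K} D_i. *)
Definition mspec (I : finType) (Y : I -> normedModType C)
    (B : forall i j, Y j -> Y i) (D : forall i, set (Y i)) (K : pred I) : set C :=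
  let dom (x : forall i, Y i) := forall i, K i -> D i (x i) in
  let app lam (x : forall i, Y i) i := lam *: x i - \sum_(j | K j) B i j (x j) in
  let nrm (x : forall i, Y i) := \sum_(i | K i) `|x i| in
  [set lam | ~ [/\ (forall x y, dom x -> dom y ->
                       (forall i, K i -> app lam x i = app lam y i) ->
                       forall i, K i -> x i = y i),
                  (forall y : forall i, Y i, exists2 x, dom x &
                       forall i, K i -> app lam x i = y i) &
                  (exists c : C, forall x, dom x ->
                       nrm x <= c * \sum_(i | K i) `|app lam x i|)]].

(** The resolvent (lambda - A)^{-1} (meaningful when lambda is not in spec1). *)
Definition resolv (X : normedModType C) (A : X -> X) (D : set X) (lam : C) (y : X) : X :=
  xget 0 [set x | D x /\ lam *: x - A x = y].

Definition opnorm (X Y : normedModType C) (T : X -> Y) : \bar R :=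
  @ereal_sup R [set (complex.Re `|T x|)%:E | x in [set x : X | `|x| <= 1]].

End OperatorMatrix.
Arguments lin_on {R X Y} A D.
Arguments closed_op {R X} A D.
Arguments spec1 {R X} A D.
Arguments mspec {R I Y} B D K.
Arguments resolv {R X} A D lam y.
Arguments opnorm {R X Y} T.

Section OperatorMatrix2.
Variable R : realType.
Local Notation C := (R[i]).
Variables (n : nat) (X : 'I_n -> normedModType C)
  (A : forall i j : 'I_n, X j -> X i) (D : forall i j : 'I_n, set (X j)).

Definition Dd (i : 'I_n) : set (X i) := D i i.

Definition sigmaA : set C := mspec A Dd predT.

(** sigma(A(pi)_k): upper-left k x k block of the permuted matrix. *)
Definition sigmaAperm (p : {perm 'I_n}) (k : nat) : set C :=
  @mspec R _ (fun i => X ((p^-1)%g i))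
    (fun i j => A ((p^-1)%g i) ((p^-1)%g j))
    (fun i => Dd ((p^-1)%g i)) (fun i : 'I_n => (val i < k)%N).

Definition Rkj (k j : 'I_n) (lam : C) : \bar R :=
  (\sum_(i < n | i != k)
     opnorm (fun y : X j => (
       A i k (resolv (A k k) (Dd k) lam (A k j (resolv (A j j) (Dd j) lam y)))
       + (i != j)%:R *: A i j (resolv (A j j) (Dd j) lam y))%R))%E.

Definition Skj (k j : 'I_n) : set C :=
  spec1 (A k k) (Dd k) `|` spec1 (A j j) (Dd j) `|`
  [set lam | ~ spec1 (A k k) (Dd k) lam /\ ~ spec1 (A j j) (Dd j) lam /\
             (1 <= Rkj k j lam)%E].

Definition Sk (k : 'I_n) : set C := \bigcup_(j in [set j | j != k]) Skj k j.

(** The index set I_0 (0-based indices: positions 1..n become 0..n-1). *)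
Definition I0 : set 'I_n :=
  [set m | exists p : {perm 'I_n},
     val (p m) = n.-1 /\
     forall k : nat, (2 <= k <= n.-1)%N -> forall q : 'I_n, val q = k.-1 ->
       spec1 (A ((p^-1)%g q) ((p^-1)%g q)) (Dd ((p^-1)%g q)) `|` sigmaAperm p k
         != setT].

End OperatorMatrix2.
Arguments Dd {R n X} D i.
Arguments sigmaA {R n X} A D.
Arguments sigmaAperm {R n X} A D p k.
Arguments Rkj {R n X} A D k j lam.
Arguments Skj {R n X} A D k j.
Arguments Sk {R n X} A D k.
Arguments I0 {R n X} A D.

From HB Require Import structures.
From mathcomp Require Import all_boot all_order all_algebra all_fingroup.
From mathcomp Require Import all_classical all_reals all_analysis.
From mathcomp Require Import complex.
From mathcomp Require Import ring lra.
Import Order.TTheory GRing.Theory Num.Theory.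
Import numFieldNormedType.Exports.
Local Open Scope ring_scope.
Local Open Scope classical_set_scope.

(* Fix m and lambda outside S_m(A).  Then every lambda - A_jj has a bounded inverse
   R_j, and by relative boundedness every AR_ij := A_ij R_j is bounded.  Substituting
   z_j = (lambda - A_jj) x_j turns (lambda - A) x = y into
   z_i - sum_(j <> i) AR_ij z_j = y_i.  Eliminating z_m leaves, for i <> m,
   z_i = y_i + AR_im y_m + sum_(j <> m) T_ij z_j  with  T_ij = AR_im AR_mj + (1 - delta_ij) AR_ij,
   and the column sums sum_(i <> m) ||T_ij|| are exactly R_mj(lambda) < 1.  The reduced
   system is therefore a contraction for the l^1 norm: it is solvable, and its solutions
   are bounded by the data, which gives a bounded inverse of lambda - A.  The argument
   works for every m. *)

(* Norms of C-normed spaces are complex numbers with zero imaginary part; all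
   estimates are carried out on their real parts. *)
Local Notation N x := (complex.Re `|x|).

Section RealPartOfNorm.
Context {R : realType}.
Local Notation C := R[i].

Lemma Re_ler {a b : C} : a <= b -> complex.Re a <= complex.Re b.
Proof. by rewrite lecE => /andP[]. Qed.

Lemma Re_realM (a : R) (z : C) : complex.Re (real_complex R a * z) = a * complex.Re z.
Proof. by case: z => p q /=; rewrite mul0r subr0. Qed.

Lemma normr_real (a : R) : `|real_complex R a| = real_complex R `|a|.
Proof. by rewrite normc_def /= expr0n /= addr0 sqrtr_sqr. Qed.

Lemma Re_normC_ge0 (z : C) : 0 <= N z.
Proof. by have := Re_ler (normr_ge0 z); rewrite raddf0. Qed.

Context {V : normedModType C}.
Implicit Types x y : V.

Lemma normr_ReE x : `|x| = real_complex R (N x).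
Proof. by case E: `|x| => [a b]; have := ger0_Im (normr_ge0 x); rewrite E /= => ->. Qed.

Lemma Re_normr_ge0 x : 0 <= N x.
Proof. by have := Re_ler (normr_ge0 x); rewrite raddf0. Qed.

Lemma Re_ler_normD x y : N (x + y) <= N x + N y.
Proof. by have := Re_ler (ler_normD x y); rewrite raddfD. Qed.

Lemma Re_normrZ (a : C) x : N (a *: x) = N a * N x.
Proof. by rewrite normrZ (normr_ReE x) mulrC Re_realM mulrC. Qed.

Lemma Re_distrC x y : N (x - y) = N (y - x).
Proof. by rewrite -normrN opprB. Qed.

Lemma Re_normr_le0 x : N x <= 0 -> x = 0.
Proof.
move=> x0; apply/normr0_eq0; rewrite normr_ReE.
suff -> : N x = 0 by [].
by apply/eqP; rewrite eq_le x0 Re_normr_ge0.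
Qed.

Lemma Re_ler_norm_sum (I : Type) (r : seq I) (P : pred I) (F : I -> V) :
  N (\sum_(i <- r | P i) F i) <= \sum_(i <- r | P i) N (F i).
Proof. by rewrite -(raddf_sum (@complex.Re R)); exact: Re_ler (ler_norm_sum r F P). Qed.

End RealPartOfNorm.

Lemma Re_norm_le_sum {R : realType} {I : finType} {V : I -> normedModType R[i]} (P : pred I)
    (F : forall i, V i) i :
  P i -> N (F i) <= \sum_(j | P j) N (F j).
Proof.
by move=> Pi; rewrite (bigD1 i) //= lerDl sumr_ge0 // => j _; exact: Re_normr_ge0.
Qed.

Lemma sum_normr_ReE {R : realType} {I : finType} {V : I -> normedModType R[i]} (P : pred I)
    (F : forall i, V i) :
  \sum_(i | P i) `|F i| = real_complex R (\sum_(i | P i) N (F i)).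
Proof. by rewrite raddf_sum; apply: eq_bigr => i _; exact: normr_ReE. Qed.

Lemma uniform_bound {R : realType} {I : finType} (P : pred I) (V W : I -> normedModType R[i])
    (F : forall i, V i -> W i) :
  (forall i, P i -> exists c : R, forall y, N (F i y) <= c * N y) ->
  exists c : R, 0 <= c /\ forall i, P i -> forall y, N (F i y) <= c * N y.
Proof.
move=> bnd.
have /choice [c c_bnd] : forall i, exists c : R, P i -> forall y, N (F i y) <= c * N y.
  by move=> i; have [Pi|_] := boolP (P i); [have [c ?] := bnd i Pi; exists c | exists 0].
exists (\big[Num.max/0]_i c i); split => [|i Pi y]; first exact: bigmax_ge_id.
apply: le_trans (c_bnd i Pi y) _; rewrite ler_wpM2r ?Re_normr_ge0 //.
exact: le_bigmax.
Qed.

Section Resolvent.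
Context {R : realType} {V : normedModType R[i]}.
Variables (T : V -> V) (Dm : set V) (lam : R[i]).
Hypothesis T_lin : lin_on T Dm.
Hypothesis lam_res : ~ spec1 T Dm lam.

Let lam_sub_T_invertible :
  [/\ (forall x y, Dm x -> Dm y -> lam *: x - T x = lam *: y - T y -> x = y),
      (forall y, exists2 x, Dm x & lam *: x - T x = y) &
      (exists c : R[i], forall x, Dm x -> `|x| <= c * `|lam *: x - T x|)].
Proof. exact: contrapT. Qed.

Lemma resolv_spec y :
  Dm (resolv T Dm lam y) /\ lam *: resolv T Dm lam y - T (resolv T Dm lam y) = y.
Proof.
case: lam_sub_T_invertible => _ onto _; have [x Dx xy] := onto y.
exact: (@xgetPex _ 0 [set x | Dm x /\ lam *: x - T x = y] (ex_intro _ x (conj Dx xy))).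
Qed.

Lemma resolv_dom y : Dm (resolv T Dm lam y). Proof. by case: (resolv_spec y). Qed.

Lemma resolvK y : lam *: resolv T Dm lam y - T (resolv T Dm lam y) = y.
Proof. by case: (resolv_spec y). Qed.

Lemma sub_resolvK x : Dm x -> resolv T Dm lam (lam *: x - T x) = x.
Proof.
move=> Dx; case: lam_sub_T_invertible => inj _ _.
by apply: inj => //; [exact: resolv_dom | rewrite resolvK].
Qed.

Lemma resolv_linear (a : R[i]) u v :
  resolv T Dm lam (a *: u + v) = a *: resolv T Dm lam u + resolv T Dm lam v.
Proof.
case: T_lin => _ [Dlin Tlin]; set ru := resolv _ _ _ u; set rv := resolv _ _ _ v.
have Dru := resolv_dom u; have Drv := resolv_dom v.
have -> : a *: u + v = lam *: (a *: ru + rv) - T (a *: ru + rv).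
  rewrite Tlin // -{1}(resolvK u) -{1}(resolvK v) -/ru -/rv.
  by rewrite !scalerBr scalerDr !scalerA (mulrC a) addrACA opprD.
by rewrite sub_resolvK //; exact: Dlin.
Qed.

Lemma resolv_bounded : exists c : R, forall y, N (resolv T Dm lam y) <= c * N y.
Proof.
case: lam_sub_T_invertible => _ _ [c below]; exists `|complex.Re c| => y.
have := Re_ler (below _ (resolv_dom y)); rewrite resolvK (normr_ReE y) mulrC Re_realM.
by move/le_trans; apply; rewrite mulrC ler_wpM2r ?Re_normr_ge0 ?ler_norm.
Qed.

End Resolvent.
Arguments resolv_dom {R V T Dm lam}.
Arguments resolvK {R V T Dm lam}.
Arguments sub_resolvK {R V T Dm lam}.
Arguments resolv_linear {R V T Dm lam}.
Arguments resolv_bounded {R V T Dm lam}.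

Lemma near_infty_ex (P : nat -> Prop) (t0 : nat) :
  (\forall t \near \oo, P t) -> exists t, (t0 <= t)%N /\ P t.
Proof.
by move=> Pinfty; have [t []] := filter_ex (filterI (nbhs_infty_ge t0) Pinfty); exists t.
Qed.

Lemma geometric_lt {R : realType} {q e : R} (K : R) : 0 <= q -> q < 1 -> 0 < e ->
  exists t, K * q ^+ t < e.
Proof.
move=> q0 q1 e0; have [K0|K0] := lerP K 0.
  by exists 0%N; rewrite expr0 mulr1 (le_lt_trans K0).
have hq : `|q| < 1 by rewrite ger0_norm.
have /cvgrPdist_lt /(_ (e / K)) := cvg_expr hq.
rewrite divr_gt0 // => /(_ isT) /(near_infty_ex _ 0) [t [_ ht]]; exists t.
rewrite sub0r normrN ger0_norm ?exprn_ge0 // in ht.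
by rewrite -ltr_pdivlMl // mulrC.
Qed.

Section ContractiveSystem.
Context {R : realType} {I : finType}.
Variables (P : pred I) (X : I -> completeNormedModType R[i])
  (T : forall i j, X j -> X i) (L : I -> I -> R) (q : R).
Hypothesis T_sub : forall i j, {morph T i j : u v / u - v}.
Hypothesis T_bound : forall i j u, P i -> P j -> N (T i j u) <= L i j * N u.
Hypothesis colsum_le : forall j, P j -> \sum_(i | P i) L i j <= q.
Hypothesis q_ge0 : 0 <= q.
Hypothesis q_lt1 : q < 1.

Lemma sum_system_le (w : forall j, X j) :
  \sum_(i | P i) N (\sum_(j | P j) T i j (w j)) <= q * \sum_(j | P j) N (w j).
Proof.
apply: (@le_trans _ _ (\sum_(i | P i) \sum_(j | P j) L i j * N (w j))).
  apply: ler_sum => i Pi; apply: le_trans; first exact: Re_ler_norm_sum.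
  by apply: ler_sum => j Pj; exact: T_bound.
rewrite exchange_big /= mulr_sumr; apply: ler_sum => j Pj.
by rewrite -mulr_suml ler_wpM2r ?Re_normr_ge0 ?colsum_le.
Qed.

Lemma system_solution_bound (b w : forall i, X i) :
  (forall i, P i -> w i = b i + \sum_(j | P j) T i j (w j)) ->
  (1 - q) * \sum_(i | P i) N (w i) <= \sum_(i | P i) N (b i).
Proof.
move=> wE; have := sum_system_le w.
have : \sum_(i | P i) N (w i) <=
       \sum_(i | P i) N (b i) + \sum_(i | P i) N (\sum_(j | P j) T i j (w j)).
  by rewrite -big_split /=; apply: ler_sum => i Pi; rewrite {1}wE //; exact: Re_ler_normD.
nra.
Qed.

Variable b : forall i, X i.

Let Phi (w : forall i, X i) : forall i, X i := fun i => b i + \sum_(j | P j) T i j (w j).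
Let iterate t := iter t Phi (fun=> 0).
Let dist (w w' : forall i, X i) := \sum_(i | P i) N (w i - w' i).
Let E := dist (iterate 1) (iterate 0) / (1 - q).

Let dist_ge w w' i : P i -> N (w i - w' i) <= dist w w'.
Proof.
exact: (@Re_norm_le_sum _ _ _ P (fun j => w j - w' j)).
Qed.

Let dist_Phi w w' : dist (Phi w) (Phi w') <= q * dist w w'.
Proof.
apply: le_trans (sum_system_le (fun j => w j - w' j)); apply: ler_sum => i _.
rewrite /Phi opprD addrACA subrr add0r -sumrB.
by under eq_bigr do rewrite -T_sub.
Qed.

Let iterate_dist i t k : P i ->
  N (iterate (t + k) i - iterate t i) <= E * (q ^+ t - q ^+ (t + k)).
Proof.
have step l : dist (iterate l.+1) (iterate l) <= q ^+ l * dist (iterate 1) (iterate 0).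
  elim: l => [|l IH]; first by rewrite expr0 mul1r.
  rewrite exprS -mulrA; apply: le_trans (dist_Phi _ _) _; exact: ler_wpM2l.
move=> Pi; elim: k => [|k IH]; first by rewrite addn0 !subrr normr0 mulr0.
rewrite addnS -(subrK (iterate (t + k) i) (iterate _ i)) -addrA.
apply: le_trans (Re_ler_normD _ _) _.
have -> : E * (q ^+ t - q ^+ (t + k).+1) =
          q ^+ (t + k) * dist (iterate 1) (iterate 0) + E * (q ^+ t - q ^+ (t + k)).
  by rewrite /E exprS; field; rewrite subr_eq0 gt_eqF.
apply: lerD IH; apply: le_trans (step _).
exact: dist_ge.
Qed.

Let iterate_cauchy i t s : P i -> (t <= s)%N -> N (iterate s i - iterate t i) <= E * q ^+ t.
Proof.
have E_ge0 : 0 <= E.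
  by rewrite divr_ge0 ?subr_ge0 ?(ltW q_lt1) // sumr_ge0 // => j _; exact: Re_normr_ge0.
move=> Pi /subnKC <-; apply: le_trans (iterate_dist _ _ _ Pi) _.
by rewrite ler_wpM2l // lerBlDr lerDl exprn_ge0.
Qed.

Let iterate_cvg i : P i -> cvgn (iterate^~ i).
Proof.
move=> Pi; apply: cauchy_cvg; apply: cauchy_exP => eps.
rewrite ltcE /= => /andP[/eqP eps_real eps_gt0].
have [t0 ht0] := geometric_lt E q_ge0 q_lt1 eps_gt0.
exists (iterate t0 i); apply: filterS (nbhs_infty_ge t0) => s t0s.
rewrite -ball_normE /= ltcE eps_real ger0_Im ?normr_ge0 // eqxx /=.
by apply: le_lt_trans ht0; rewrite Re_distrC; exact: iterate_cauchy.
Qed.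

Let w i := limn (iterate^~ i).

Let w_dist i t : P i -> N (w i - iterate t i) <= E * q ^+ t.
Proof.
move=> Pi; apply/ler_addgt0Pr => e e_gt0.
have /cvgrPdist_lt /(_ (real_complex R e)) := iterate_cvg _ Pi.
rewrite ltcR => /(_ e_gt0) /(near_infty_ex _ t) [s [ts hs]].
rewrite -(subrK (iterate s i) (w i)) -addrA; apply: le_trans (Re_ler_normD _ _) _.
rewrite [leRHS]addrC; apply: lerD; last exact: iterate_cauchy.
by move: hs; rewrite ltcE => /andP[_ /ltW].
Qed.

Lemma contractive_system_solvable :
  exists w : forall i, X i, forall i, P i -> w i = b i + \sum_(j | P j) T i j (w j).
Proof.
exists w => i Pi; apply/eqP; rewrite -subr_eq0; apply/eqP/Re_normr_le0.
set a := N _; pose K := E * q + q * (E * \sum_(j | P j) 1).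
have a_le t : a <= K * q ^+ t.
  rewrite /a -(subrK (iterate t.+1 i) (w i)) -addrA.
  apply: le_trans (Re_ler_normD _ _) _.
  have Phi_dist : N (iterate t.+1 i - Phi w i) <= q * (E * q ^+ t * \sum_(j | P j) 1).
    apply: le_trans (dist_ge _ _ _ Pi) _; apply: le_trans (dist_Phi (iterate t) w) _.
    rewrite ler_wpM2l // mulr_sumr; apply: ler_sum => j Pj.
    by rewrite mulr1 Re_distrC; exact: w_dist.
  apply: le_trans (lerD (w_dist _ t.+1 Pi) Phi_dist) _.
  by rewrite /K exprS le_eqVlt; apply/orP; left; apply/eqP; ring.
rewrite leNgt; apply/negP => a_gt0.
have [t ht] := geometric_lt K q_ge0 q_lt1 a_gt0.
by move: (lt_le_trans ht (a_le t)); rewrite ltxx.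
Qed.

End ContractiveSystem.

Section OperatorNorm.
Context {R : realType} {V W : normedModType R[i]}.
Variable F : V -> W.
Hypothesis F_lin : forall (a : R[i]) u v, F (a *: u + v) = a *: F u + F v.

Lemma lin_map0 : F 0 = 0.
Proof.
have := F_lin 1 0 0; rewrite !scale1r !addr0 => FF.
by apply: (addIr (F 0)); rewrite add0r -FF.
Qed.

Lemma opnorm_ge0 : (0 <= opnorm F)%E.
Proof.
apply: ereal_sup_ubound; exists 0 => /=; first by rewrite normr0.
by rewrite lin_map0 normr0.
Qed.

Lemma opnorm_bound (L : R) : opnorm F = L%:E -> forall u, N (F u) <= L * N u.
Proof.
move=> FL u; have FZ (a : R[i]) v : F (a *: v) = a *: F v.
  by rewrite -[a *: v]addr0 F_lin lin_map0 addr0.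
have [->|u0] := eqVneq u 0.
  by rewrite lin_map0 !normr0 /= mulr0.
have Nu_gt0 : 0 < N u.
  rewrite lt_def Re_normr_ge0 andbT; apply: contra u0 => /eqP Nu0.
  by apply/eqP/Re_normr_le0; rewrite Nu0.
pose v := real_complex R (N u)^-1 *: u.
have : ((N (F v))%:E <= opnorm F)%E.
  apply: ereal_sup_ubound; exists v => //.
  rewrite /= /v normrZ (normr_ReE u) normr_real ger0_norm ?invr_ge0 ?Re_normr_ge0 //.
  by rewrite -rmorphM mulVf ?gt_eqF.
rewrite FL lee_fin /v FZ Re_normrZ normr_real /= ger0_norm ?invr_ge0 ?Re_normr_ge0 //.
by rewrite -ler_pdivlMl ?invr_gt0 // invrK mulrC.
Qed.

End OperatorNorm.
Arguments lin_map0 {R V W F}.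
Arguments opnorm_ge0 {R V W F}.
Arguments opnorm_bound {R V W F}.

Section OperatorMatrixResolvent.
Context {R : realType}.
Local Notation C := R[i].
Variables (n : nat) (X : 'I_n -> completeNormedModType C)
  (A : forall i j : 'I_n, X j -> X i) (D : forall i j : 'I_n, set (X j)).
Hypothesis A_lin : forall i j, lin_on (A i j) (D i j).
Hypothesis D_diag_sub : forall i j, i != j -> D j j `<=` D i j.
Variables (c d : 'I_n -> 'I_n -> R).
Hypothesis c_ge0 : forall i j, i != j -> 0 <= c i j.
Hypothesis d_ge0 : forall i j, i != j -> 0 <= d i j.
Hypothesis A_rel_bound : forall i j, i != j -> forall x, D j j x ->
  `|A i j x| <= real_complex R (c i j) * `|A j j x| + real_complex R (d i j) * `|x|.
Variable lam : C.
Hypothesis lam_res : forall j, ~ spec1 (A j j) (Dd D j) lam.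

Let res j : X j -> X j := resolv (A j j) (Dd D j) lam.
Let AR i j (y : X j) : X i := A i j (res j y).

Let res_dom j y : D j j (res j y). Proof. exact: resolv_dom. Qed.
Let resK j y : lam *: res j y - A j j (res j y) = y. Proof. exact: resolvK. Qed.
Let sub_resK j x : D j j x -> res j (lam *: x - A j j x) = x. Proof. exact: sub_resolvK. Qed.

Let A_linear i j (a : C) x y : D j j x -> D j j y ->
  A i j (a *: x + y) = a *: A i j x + A i j y.
Proof.
move=> Dx Dy; have [ij|ij] := eqVneq i j; first by subst i; case: (A_lin j j) => _ [_ ->].
by case: (A_lin i j) => _ [_ ->] //; exact: D_diag_sub.
Qed.

Let AR_linear i j (a : C) u v : AR i j (a *: u + v) = a *: AR i j u + AR i j v.
Proof. by rewrite /AR /res resolv_linear // A_linear //; exact: res_dom. Qed.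

Let AR_sub i j : {morph AR i j : u v / u - v}.
Proof. by move=> u v; rewrite addrC -scaleN1r AR_linear scaleN1r addrC. Qed.

Let AR_sum i j (I : Type) (r : seq I) (P : pred I) (F : I -> X j) :
  AR i j (\sum_(k <- r | P k) F k) = \sum_(k <- r | P k) AR i j (F k).
Proof.
apply: big_morph; last exact: lin_map0 (AR_linear i j).
by move=> u v; rewrite -[u]scale1r AR_linear !scale1r.
Qed.

Let AR_bounded i j : i != j -> exists B : R, forall u, N (AR i j u) <= B * N u.
Proof.
move=> ij; have [cr res_bound] := resolv_bounded (lam_res j).
exists (c i j * (N lam * cr + 1) + d i j * cr) => u; set x := res j u; set Nlam := N lam.
have Ax : A j j x = lam *: x - u by rewrite -(resK j u) opprB addrC subrK.
have NAx : N (A j j x) <= Nlam * (cr * N u) + N u.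
  rewrite Ax; apply: le_trans (Re_ler_normD _ _) _; rewrite Re_normrZ normrN.
  by rewrite lerD2r ler_wpM2l ?Re_normC_ge0 //; exact: res_bound.
have := Re_ler (A_rel_bound _ _ ij _ (res_dom j u)); rewrite raddfD /= !Re_realM -/x.
move/le_trans; apply.
apply: le_trans (lerD (ler_wpM2l (c_ge0 _ _ ij) NAx) (ler_wpM2l (d_ge0 _ _ ij) (res_bound u))) _.
by rewrite le_eqVlt; apply/orP; left; apply/eqP; ring.
Qed.

Variable m : 'I_n.
Hypothesis Rmj_lt1 : forall j, j != m -> (Rkj A D m j lam < 1)%E.

(* The coefficients of the system for (z_i)_(i <> m) left after eliminating z_m. *)
Let T i j (y : X j) : X i := AR i m (AR m j y) + (i != j)%:R *: AR i j y.

Let T_linear i j (a : C) u v : T i j (a *: u + v) = a *: T i j u + T i j v.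
Proof.
rewrite /T !AR_linear !scalerDr !scalerA (mulrC _ a) -!scalerA.
by rewrite -!addrA; congr (_ + _); rewrite addrCA.
Qed.

Let T_sub i j : {morph T i j : u v / u - v}.
Proof. by move=> u v; rewrite addrC -scaleN1r T_linear scaleN1r addrC. Qed.

Let L i j := fine (opnorm (T i j)).

Let opnorm_TE i j : i != m -> j != m -> opnorm (T i j) = (L i j)%:E.
Proof.
move=> im jm; rewrite /L fineK // ge0_fin_numE; last exact: opnorm_ge0 (T_linear i j).
apply: le_lt_trans (lt_trans (Rmj_lt1 _ jm) (ltry 1)).
rewrite [Rkj _ _ _ _ _](bigD1 i) //= leeDl // sume_ge0 // => k _.
exact: opnorm_ge0 (T_linear k j).
Qed.

Let T_bound i j u : i != m -> j != m -> N (T i j u) <= L i j * N u.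
Proof. by move=> im jm; apply: (opnorm_bound (T_linear i j)); exact: opnorm_TE. Qed.

Let q := \big[Num.max/0]_(j | j != m) \sum_(i | i != m) L i j.

Let colsum_le_q j : j != m -> \sum_(i | i != m) L i j <= q.
Proof. by move=> jm; rewrite /q; exact: le_bigmax_cond. Qed.

Let q_ge0 : 0 <= q. Proof. exact: bigmax_ge_id. Qed.

Let q_lt1 : q < 1.
Proof.
rewrite /q; apply: bigmax_lt => // j jm; rewrite -lte_fin -sumEFin.
by rewrite -(eq_bigr _ (fun i im => opnorm_TE _ _ im jm)); exact: Rmj_lt1.
Qed.

Let sum_AR_elim (z : forall j, X j) i : i != m ->
  \sum_(j | j != i) AR i j (z j) =
  AR i m (z m - \sum_(j | j != m) AR m j (z j)) + \sum_(j | j != m) T i j (z j).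
Proof.
move=> im; rewrite AR_sub AR_sum /T big_split /= addrA subrK.
rewrite (bigD1 m) 1?eq_sym //=; congr (_ + _).
rewrite [RHS](bigD1 i) //= eqxx scale0r add0r.
apply: eq_big => [j|j /andP[ji _]]; first by rewrite andbC.
by rewrite eq_sym ji scale1r.
Qed.

Let elim_system (z : forall j, X j) i : i != m ->
  let y k := z k - \sum_(j | j != k) AR k j (z j) in
  z i = (y i + AR i m (y m)) + \sum_(j | j != m) T i j (z j).
Proof. by move=> im y; rewrite /y sum_AR_elim // opprD addrA addrAC !subrK. Qed.

Let lamA (x : forall j, X j) i := lam *: x i - \sum_(j | predT j) A i j (x j).

Let lamA_res (z : forall j, X j) i :
  lamA (fun j => res j (z j)) i = z i - \sum_(j | j != i) AR i j (z j).
Proof. by rewrite /lamA (bigD1 i) //= opprD addrA resK. Qed.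

Let lamA_surjective (y : forall i, X i) :
  exists2 x : forall j, X j, (forall j, D j j (x j)) & forall i, lamA x i = y i.
Proof.
have [w w_eq] := @contractive_system_solvable R _ (fun i => i != m) X T L q T_sub
  T_bound colsum_le_q q_ge0 q_lt1 (fun i => y i + AR i m (y m)).
pose z := @eqtype.dfwith _ (fun j => X j : Type) w m (y m + \sum_(j | j != m) AR m j (w j)).
have zE j : j != m -> z j = w j by move=> jm; rewrite /z dfwith_out // eq_sym.
have z_m : z m - \sum_(j | j != m) AR m j (z j) = y m.
  rewrite /z dfwith_in (eq_bigr _ (fun j jm => congr1 (AR m j) (zE j jm))).
  by rewrite addrK.
exists (fun j => res j (z j)) => [j|i]; first exact: res_dom.
rewrite lamA_res; have [->|im] := eqVneq i m; first exact: z_m.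
rewrite sum_AR_elim // z_m (eq_bigr _ (fun j jm => congr1 (T i j) (zE j jm))).
by rewrite zE // w_eq // -[y i + _ + _]addrA addrK.
Qed.

Let lamA_bounded_below : exists kap : R, forall x, (forall j, D j j (x j)) ->
  \sum_i N (x i) <= kap * \sum_i N (lamA x i).
Proof.
have [cr [cr_ge0 res_bound]] :=
  @uniform_bound R _ predT X X res (fun j _ => resolv_bounded (lam_res j)).
have [B [B_ge0 AR_bound]] := @uniform_bound R _ (fun ij : 'I_n * 'I_n => ij.1 != ij.2)
  (fun ij => X ij.2) (fun ij => X ij.1) (fun ij => AR ij.1 ij.2)
  (fun ij => AR_bounded ij.1 ij.2).
pose Cb := \sum_(i | i != m) (1 + B).
exists (cr * (1 + (1 + B) * (Cb / (1 - q)))) => x Dx.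
pose z j := lam *: x j - A j j (x j).
have -> : x = fun j => res j (z j).
  by apply: functional_extensionality_dep => j; rewrite sub_resK.
set Y := \sum_i N (lamA _ i); pose y i := z i - \sum_(j | j != i) AR i j (z j).
have N_y i : N (y i) <= Y.
  by rewrite /y /Y -lamA_res; exact: (@Re_norm_le_sum _ _ _ predT (lamA _)).
pose Z := \sum_(i | i != m) N (z i).
have Z_bound : (1 - q) * Z <= Cb * Y.
  apply: le_trans (@system_solution_bound _ _ (fun i => i != m) X T L q T_bound colsum_le_q
    (fun i => y i + AR i m (y m)) z (elim_system z)) _.
  rewrite /Cb mulr_suml; apply: ler_sum => i im.
  apply: le_trans (Re_ler_normD _ _) _; rewrite mulrDl mul1r lerD ?N_y //.
  by apply: le_trans (AR_bound (i, m) im _) _; rewrite ler_wpM2l.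
have zm_bound : N (z m) <= Y + B * Z.
  have -> : z m = y m + \sum_(j | j != m) AR m j (z j) by rewrite /y subrK.
  apply: le_trans (Re_ler_normD _ _) _; apply: lerD (N_y m) _.
  apply: le_trans; first exact: Re_ler_norm_sum.
  rewrite /Z mulr_sumr; apply: ler_sum => j jm.
  by apply: (AR_bound (m, j)); rewrite eq_sym.
have x_bound : \sum_j N (res j (z j)) <= cr * (N (z m) + Z).
  apply: le_trans (ler_sum _ (fun j _ => res_bound j isT (z j))) _.
  by rewrite -mulr_sumr (bigD1 m).
apply: le_trans x_bound _; rewrite -mulrA ler_wpM2l //.
have Z_le : Z <= Cb / (1 - q) * Y.
  by rewrite mulrAC ler_pdivlMr ?subr_gt0 // mulrC.
have := mulr_ge0 B_ge0 (Re_normr_ge0 (z m)); nra.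
Qed.

Let lamA_sub x y : (forall j, D j j (x j)) -> (forall j, D j j (y j)) ->
  forall i, lamA (fun j => x j - y j) i = lamA x i - lamA y i.
Proof.
move=> Dx Dy i; have A_sub j : A i j (x j - y j) = A i j (x j) - A i j (y j).
  by rewrite addrC -scaleN1r A_linear // scaleN1r addrC.
rewrite /lamA (eq_bigr _ (fun j _ => A_sub j)) sumrB scalerBr.
by rewrite !opprB addrACA [RHS]addrACA; congr (_ + _); exact: addrC.
Qed.

Lemma notin_sigmaA : ~ sigmaA A D lam.
Proof.
have [kap lamA_below] := lamA_bounded_below.
apply; split.
- move=> x y Dx Dy xy i _.
  have {}Dx j : D j j (x j) := Dx j isT.
  have {}Dy j : D j j (y j) := Dy j isT.
  have Dxy j : D j j (x j - y j).
    by case: (A_lin j j) => _ [D_lin _]; rewrite addrC -scaleN1r; exact: D_lin.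
  have lamA0 : \sum_k N (lamA (fun j => x j - y j) k) = 0.
    apply: big1 => k _; rewrite (lamA_sub _ _ Dx Dy).
    by have -> : lamA x k = lamA y k := xy k isT; rewrite subrr normr0.
  apply/eqP; rewrite -subr_eq0; apply/eqP/Re_normr_le0.
  have := lamA_below _ Dxy; rewrite lamA0 mulr0; apply: le_trans.
  exact: (@Re_norm_le_sum _ _ _ predT (fun j => x j - y j)).
- move=> y; have [x Dx lamAx] := lamA_surjective y.
  by exists x => [i _|i _]; [exact: Dx | exact: lamAx].
- exists (real_complex R kap) => x Dx.
  rewrite !sum_normr_ReE -rmorphM lecR.
  by apply: lamA_below => j; exact: Dx.
Qed.

End OperatorMatrixResolvent.

Lemma ord_neq_exists {n : nat} (m : 'I_n) : (1 < n)%N -> exists j : 'I_n, j != m.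
Proof.
case: m => [[|k] km] n_gt1.
  by exists (Ordinal n_gt1); rewrite -val_eqE.
by exists (Ordinal (ltnW n_gt1)); rewrite -val_eqE.
Qed.

Theorem theorem5p5 (R : realType) (n : nat) (hn : (2 <= n)%N)
  (X : 'I_n -> completeNormedModType R[i])
  (A : forall i j : 'I_n, X j -> X i) (D : forall i j : 'I_n, set (X j))
  (hlin : forall i j, lin_on (A i j) (D i j))
  (hclosed : forall i, closed_op (A i i) (D i i))
  (hdom : forall i j, i != j -> D j j `<=` D i j)
  (c d : 'I_n -> 'I_n -> R)
  (hc0 : forall i j, i != j -> 0 <= c i j)
  (hd0 : forall i j, i != j -> 0 <= d i j)
  (hrel : forall i j, i != j -> forall x, D j j x ->
     `|A i j x| <= real_complex R (c i j) * `|A j j x| + real_complex R (d i j) * `|x|)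
  (hcsum : forall j, \sum_(i < n | i != j) c i j < 1) :
  sigmaA A D `<=` \bigcap_(m in I0 A D) Sk A D m.
Proof.
move=> lam lam_sigma m _; apply: contrapT => lam_Sm.
have Skj_notin j : j != m -> ~ Skj A D m j lam by move=> jm ?; apply: lam_Sm; exists j.
have [j0 j0m] := ord_neq_exists m hn.
have lam_res j : ~ spec1 (A j j) (Dd D j) lam.
  have [->|jm] := eqVneq j m => lam_spec.
    by apply: (Skj_notin j0 j0m); left; left.
  by apply: (Skj_notin j jm); left; right.
apply: (@notin_sigmaA R n X A D hlin hdom c d hc0 hd0 hrel lam lam_res m _ lam_sigma) => j jm.
by rewrite ltNge; apply/negP => Rmj_ge1; apply: (Skj_notin j jm); right.
Qed.
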